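(* Let $m$ be an even positive integer and let $a\ge 1$. Let $\mathcal{H}_\infty$ be the $m$-order infinite dimensional generalized Hilbert tensor and, for a positive integer $n$, $\mathcal{H}_n$ the $m$-order $n$-dimensional generalized Hilbert tensor, with entries $$\mathcal{H}_{i_1 i_2\cdots i_m}=\frac{1}{i_1+i_2+\cdots+i_m-m+a}$$ (with $i_1,\dots,i_m$ ranging over all positive integers for $\mathcal{H}_\infty$, and over $\{1,\dots,n\}$ for $\mathcal{H}_n$). Then both are positive definite, i.e. $$\mathcal{H}_\infty x^m=\sum_{i_1,\dots,i_m=1}^\infty \frac{x_{i_1}\cdots x_{i_m}}{i_1+\cdots+i_m-m+a}>0\quad\text{for all nonzero } x\in l^1,$$ $$\mathcal{H}_n x^m=\sum_{i_1,\dots,i_m=1}^n \frac{x_{i_1}\cdots x_{i_m}}{i_1+\cdots+i_m-m+a}>0\quad\text{for all nonzero } x\in\mathbb{R}^n.$$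
   Context: $l^1$ denotes the space of real sequences $x=(x_i)_{i=1}^\infty$ with $\sum_{i=1}^\infty |x_i|<\infty$; the series defining $\mathcal{H}_\infty x^m$ converges absolutely for $x\in l^1$. *)

From HB Require Import structures.
From mathcomp Require Import all_boot all_order all_algebra.
From mathcomp Require Import all_classical all_reals all_analysis.
Set Implicit Arguments. Unset Strict Implicit. Unset Printing Implicit Defensive.
Import Order.TTheory GRing.Theory Num.Theory numFieldNormedType.Exports.
Local Open Scope ring_scope.

(* Indices are 0-based: index i : 'I_n stands for the positive integer i+1.
   Hence the entry 1/(i_1+...+i_m - m + a) (1-based) becomes
   1/((i_1+...+i_m) + a) with 0-based indices. *)

Definition gen_hilbert_form (R : realType) (m n : nat) (a : R)
    (x : 'I_n -> R) : R :=
  \sum_(t : {ffun 'I_m -> 'I_n})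
     (\prod_(k < m) x (t k)) / ((\sum_(k < m) (t k : nat))%:R + a).

Definition in_l1 (R : realType) (x : nat -> R) : Prop :=
  cvgn [sequence \sum_(0 <= i < N) `|x i|]_N.

From HB Require Import structures.
From mathcomp Require Import all_boot all_order all_algebra.
From mathcomp Require Import all_classical all_reals all_analysis.
From mathcomp Require Import ring lra.
Import Order.TTheory GRing.Theory Num.Theory numFieldNormedType.Exports.
Local Open Scope ring_scope.
Set Implicit Arguments. Unset Strict Implicit. Unset Printing Implicit Defensive.

(* With 0-based indices, [1 / (i_1 + ... + i_m + a)] is the integral of
   [t^(i_1 + ... + i_m + a - 1)] over [0, 1], hence
   [gen_hilbert_form m a x = int_0^1 t^(a - 1) p(t)^m dt] where
   [p(t) = sum_i x_i t^i], and [p(t)^m >= 0] because [m] is even.  Instead of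
   integrating we use right-endpoint Riemann sums with [K] nodes: for exponents
   [c >= 1] they approximate [1 / c] within [1 / K], so the form is within
   [(sum_i |x_i|)^m / K] of the Riemann sum of [t^(a - 1) p(t)^m].  Near [0], [p]
   is dominated by its lowest nonzero term [x_i0 t^i0]; the nodes in a fixed
   interval there each contribute a fixed amount, which gives a positive lower
   bound depending only on [i0], [x_i0] and a bound on [sum_i |x_i|], hence
   uniform along the truncations of an [l^1] sequence.  The same Riemann sums
   show that these truncations form a Cauchy sequence. *)

Lemma expr_sum_ffun (S : comPzSemiRingType) (I : finType) (m : nat) (f : I -> S) :
  (\sum_(i : I) f i) ^+ m = \sum_(t : {ffun 'I_m -> I}) \prod_(k < m) f (t k).
Proof. by rewrite -[m in LHS]card_ord -prodr_const bigA_distr_bigA. Qed.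

Lemma norm_exprB_le (R : numDomainType) (n : nat) (u v B : R) :
  `|u| <= B -> `|v| <= B -> `|u ^+ n - v ^+ n| <= n%:R * B ^+ n.-1 * `|u - v|.
Proof.
move=> u_le v_le; have B0 : 0 <= B by apply: le_trans u_le.
rewrite subrXX normrM mulrC ler_wpM2r //.
apply: le_trans (ler_norm_sum _ _ _) _.
apply: (@le_trans _ _ (\sum_(i < n) B ^+ n.-1)); last first.
  by rewrite sumr_const card_ord mulr_natl.
apply: ler_sum => i _; rewrite normrM !normrX.
have -> : B ^+ n.-1 = B ^+ (n.-1 - i) * B ^+ i.
  by rewrite -exprD subnK // -ltnS prednK // (leq_ltn_trans _ (ltn_ord i)).
by apply: ler_pM; rewrite ?exprn_ge0 // lerXn2r ?nnegrE.
Qed.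

Lemma norm_sum_pow_le (R : realDomainType) (I : Type) (r : seq I) (P : pred I)
    (u : I -> R) (e : I -> nat) (s : R) : 0 <= s <= 1 ->
  `|\sum_(i <- r | P i) u i * s ^+ e i| <= \sum_(i <- r | P i) `|u i|.
Proof.
move=> /andP[s0 s1]; apply: le_trans (ler_norm_sum _ _ _) _.
apply: ler_sum => i _; rewrite normrM normrX (ger0_norm s0).
by rewrite ler_piMr ?exprn_ile1.
Qed.

Lemma ler_of_ler_add_divn (R : archiRealFieldType) (x y C : R) : 0 <= C ->
  (forall L : nat, (0 < L)%N -> x <= y + C / L%:R) -> x <= y.
Proof.
move=> C0 x_le; apply/ler_addgt0Pr => e e0.
pose L := (Num.Def.archi_bound (C / e)).+1.
have Lp : 0 < L%:R :> R by rewrite ltr0n.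
have C_lt : C / e < L%:R.
  apply: lt_le_trans (archi_boundP _) _; first by rewrite divr_ge0 // ltW.
  by rewrite ler_nat.
apply: le_trans (x_le L isT) _; rewrite lerD2l ler_pdivrMr //.
by move: C_lt; rewrite ltr_pdivrMr // mulrC => /ltW.
Qed.

Section RiemannSum.
Variable R : realType.
Implicit Types (c t w z : R) (K : nat).

Lemma bernoulli_powR t c : 0 <= t -> 1 <= c -> 1 + c * (t - 1) <= t `^ c.
Proof.
move=> t0 c1; have [->|c_neq1] := eqVneq c 1.
  by rewrite powRr1 // mul1r addrC subrK.
have c_gt1 : 1 < c by rewrite lt_neqAle eq_sym c_neq1 c1.
have c0 : 0 < c by lra.
(* Young's inequality for [t] and [1] with the conjugate exponents [c] and [c / (c - 1)] *)
have q0 : 0 < c / (c - 1) by rewrite divr_gt0 // subr_gt0.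
have := @conjugate_powR R t 1 c (c / (c - 1)) t0 ler01 c0 q0.
rewrite powR1 mulr1 invf_div.
have -> : c^-1 + (c - 1) / c = 1 by field; rewrite gt_eqF.
move=> /(_ erefl) young.
have : c * t <= t `^ c + (c - 1).
  have := ler_wpM2l (ltW c0) young.
  rewrite mulrDr mulrCA divff ?gt_eqF // mulr1 mul1r.
  by rewrite [c * ((c - 1) / c)]mulrC divfK ?gt_eqF.
lra.
Qed.

Lemma powR_tangent_le w z c : 0 <= w -> 0 <= z -> 1 <= c ->
  w `^ c + c * w `^ (c - 1) * (z - w) <= z `^ c.
Proof.
move=> w0 z0 c1; have c0 : 0 < c by lra.
have [->|w_neq0] := eqVneq w 0.
  rewrite powR0 ?gt_eqF // add0r subr0.
  have [c_eq1|c_neq1] := eqVneq (c - 1) 0.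
    by rewrite c_eq1 powRr0 mulr1 (_ : c = 1) ?mul1r ?powRr1 //; lra.
  by rewrite powR0 // mulr0 mul0r powR_ge0.
have wp : 0 < w by rewrite lt_neqAle eq_sym w_neq0.
have zE : z = w * (z / w) by rewrite mulrC divfK.
have := ler_wpM2l (powR_ge0 w c) (bernoulli_powR (divr_ge0 z0 w0) c1).
rewrite -powRM ?divr_ge0 // -zE mulrDr mulr1 => /(le_trans _); apply.
rewrite lerD2l mulrCA -mulrA ler_pM2l // -(mulr_powRB1 w0 c0).
by rewrite (mulrC w) -mulrA [w * (_ - 1)]mulrBr mulr1 -zE.
Qed.

Definition riemann_node K (j : nat) : R := j.+1%:R / K%:R.

Lemma riemann_node_gt0 K j : (0 < K)%N -> 0 < riemann_node K j.
Proof. by move=> K0; rewrite divr_gt0 ?ltr0n. Qed.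

Lemma riemann_node_le1 K j : (j < K)%N -> riemann_node K j <= 1.
Proof. by move=> jK; rewrite ler_pdivrMr ?mul1r ?ler_nat ?ltr0n //; case: K jK. Qed.

(* Right-endpoint Riemann sum of [t ^ (c - 1)] on [0, 1], whose integral is [1 / c]. *)
Definition riemann_pow K c : R :=
  K%:R^-1 * \sum_(j < K) riemann_node K j `^ (c - 1).

Lemma riemann_pow_err K c : (0 < K)%N -> 1 <= c ->
  `|riemann_pow K c - c^-1| <= K%:R^-1.
Proof.
move=> K0 c1; have c0 : 0 < c by lra.
have Kp : 0 < K%:R :> R by rewrite ltr0n.
pose s j : R := j%:R / K%:R.
have s_ge0 j : 0 <= s j by rewrite divr_ge0 // ltW.
have s_step j : s j.+1 - s j = K%:R^-1.
  by rewrite /s -mulrBl -natr1 addrAC subrr add0r mul1r.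
have sum_step (f : R -> R) : \sum_(j < K) (f (s j.+1) - f (s j)) = f 1 - f 0.
  rewrite -(big_mkord xpredT (fun j => f (s j.+1) - f (s j))).
  by rewrite (telescope_sumr (f \o s)) //= /s mul0r divff ?gt_eqF.
have tangent_lo j : c * s j `^ (c - 1) * K%:R^-1 <= s j.+1 `^ c - s j `^ c.
  by rewrite -(s_step j) lerBrDl powR_tangent_le.
have tangent_hi j : s j.+1 `^ c - s j `^ c <= c * s j.+1 `^ (c - 1) * K%:R^-1.
  rewrite -(s_step j) lerBlDr -lerBlDl -mulrN opprB.
  exact: powR_tangent_le.
have sum_pow_c : \sum_(j < K) (s j.+1 `^ c - s j `^ c) = 1.
  by rewrite (sum_step (fun t => t `^ c)) powR1 powR0 ?gt_eqF ?subr0.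
have U_ge : c^-1 <= riemann_pow K c.
  rewrite -(ler_pM2l c0) mulfV ?gt_eqF // -sum_pow_c /riemann_pow.
  rewrite mulrCA !mulr_sumr; apply: ler_sum => j _.
  by apply: le_trans (tangent_hi j) _; rewrite [X in _ <= X]mulrC.
set S := \sum_(j < K) s j `^ (c - 1).
have S_le : S <= K%:R / c.
  rewrite ler_pdivlMr // -[X in _ <= X]mul1r -ler_pdivrMr //.
  rewrite -[X in _ <= X]sum_pow_c !mulr_suml.
  by apply: ler_sum => j _; rewrite (mulrC _ c) tangent_lo.
have U_le : riemann_pow K c <= c^-1 + K%:R^-1.
  have -> : riemann_pow K c =
      K%:R^-1 * (S + \sum_(j < K) (s j.+1 `^ (c - 1) - s j `^ (c - 1))).
    rewrite /S -big_split /=; congr (_ * _).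
    by apply: eq_bigr => j _; rewrite addrC subrK.
  rewrite (sum_step (fun t => t `^ (c - 1))) powR1.
  apply: (@le_trans _ _ (K%:R^-1 * (K%:R / c + 1))).
    by rewrite ler_pM2l ?invr_gt0 // lerD // lerBlDr lerDl powR_ge0.
  by rewrite mulrDr mulr1 mulrA mulVf ?gt_eqF // mul1r.
rewrite ler_norml; apply/andP; split; lra.
Qed.

End RiemannSum.

Section HilbertRiemann.
Variables (R : realType) (m N : nat) (a : R).
Implicit Types (y : 'I_N -> R) (s : R) (K : nat).

Definition gen_poly y s : R := \sum_(i < N) y i * s ^+ i.

(* Right-endpoint Riemann sum of [int_0^1 t^(a - 1) (gen_poly y t)^m dt], an
   integral representation of [gen_hilbert_form m a y]. *)
Definition hilbert_riemann y K : R :=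
  K%:R^-1 * \sum_(j < K)
    riemann_node R K j `^ (a - 1) * gen_poly y (riemann_node R K j) ^+ m.

Lemma hilbert_riemannE y K : (0 < K)%N ->
  hilbert_riemann y K = \sum_(t : {ffun 'I_m -> 'I_N})
     (\prod_(k < m) y (t k)) * riemann_pow K ((\sum_(k < m) (t k : nat))%:R + a).
Proof.
move=> K0; rewrite /riemann_pow.
under eq_bigr do rewrite mulrCA mulr_sumr.
rewrite -mulr_sumr exchange_big /hilbert_riemann; congr (_ * _).
apply: eq_bigr => j _; set s := riemann_node R K j.
have s0 : 0 < s := riemann_node_gt0 R j K0.
rewrite /gen_poly expr_sum_ffun mulr_sumr; apply: eq_bigr => t _.
rewrite big_split /= prodrXr -addrA [in RHS]powRD ?implybE ?(gt_eqF s0) ?orbT //.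
by rewrite powR_mulrn ?ltW // mulrC -mulrA.
Qed.

Lemma hilbert_riemann_err y K : 1 <= a -> (0 < K)%N ->
  `|gen_hilbert_form m a y - hilbert_riemann y K| <= (\sum_(i < N) `|y i|) ^+ m / K%:R.
Proof.
move=> a1 K0; rewrite hilbert_riemannE // /gen_hilbert_form -sumrB.
apply: le_trans (ler_norm_sum _ _ _) _.
rewrite expr_sum_ffun mulr_suml; apply: ler_sum => t _.
rewrite -mulrBr normrM normr_prod ler_wpM2l ?prodr_ge0 // distrC.
apply: riemann_pow_err => //.
by rewrite -lerBlDr; apply: le_trans (ler0n _ _); lra.
Qed.

End HilbertRiemann.

Section LowerBound.
Variables (R : realType) (m : nat) (a : R).
Hypotheses (m_even : ~~ odd m) (a_ge1 : 1 <= a).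

Lemma gen_poly_lead_lower N (y : 'I_N -> R) (j : 'I_N) (B s : R) :
  (forall i : 'I_N, (i < j)%N -> y i = 0) -> \sum_(i < N) `|y i| <= B ->
  0 <= s <= 1 -> (`|y j| - B * s) * s ^+ j <= `|gen_poly y s|.
Proof.
move=> y_lt_j y_le /andP[s0 s1].
rewrite /gen_poly (bigD1 j) //=; set r := \sum_(i < N | i != j) y i * s ^+ i.
have r_le : `|r| <= B * s * s ^+ j.
  apply: le_trans (ler_norm_sum _ _ _) _.
  apply: (@le_trans _ _ (\sum_(i < N | i != j) `|y i| * s ^+ j.+1)).
    apply: ler_sum => i ij; rewrite normrM normrX (ger0_norm s0).
    have [ltij|leji] := ltnP i j; first by rewrite y_lt_j // normr0 !mul0r.
    by rewrite ler_wpM2l // ler_wiXn2l // ltn_neqAle leji andbT eq_sym.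
  rewrite -mulr_suml -mulrA -exprS ler_wpM2r ?exprn_ge0 //.
  by apply: le_trans y_le; rewrite [X in _ <= X](bigD1 j) //= lerDr.
have := ler_normD (y j * s ^+ j + r) (- r).
rewrite addrK normrN normrM normrX (ger0_norm s0); lra.
Qed.

Definition integrand_floor (sigma c : R) (j : nat) : R :=
  (sigma / 2) `^ (a - 1) * ((sigma / 2) ^+ j * (c / 2)) ^+ m.

Lemma integrand_floor_gt0 (sigma c : R) (j : nat) :
  0 < sigma -> 0 < c -> 0 < integrand_floor sigma c j.
Proof.
move=> sigma0 c0; rewrite /integrand_floor.
by rewrite mulr_gt0 ?powR_gt0 ?exprn_gt0 ?mulr_gt0 ?exprn_gt0 ?divr_gt0.
Qed.

Lemma hilbert_integrand_lower N (y : 'I_N -> R) (j : 'I_N) (B sigma s : R) :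
  (forall i : 'I_N, (i < j)%N -> y i = 0) -> \sum_(i < N) `|y i| <= B ->
  0 < sigma <= 1 -> B * sigma <= `|y j| / 2 -> sigma / 2 <= s <= sigma ->
  integrand_floor sigma `|y j| j <= s `^ (a - 1) * gen_poly y s ^+ m.
Proof.
move=> y_lt_j y_le /andP[sigma0 sigma1] B_sigma /andP[s_lo s_hi].
have s0 : 0 <= s by apply: le_trans s_lo; rewrite divr_ge0 ?ltW.
have lead_le : (`|y j| - B * s) * s ^+ j <= `|gen_poly y s|.
  by rewrite gen_poly_lead_lower // s0 (le_trans s_hi sigma1).
have B0 : 0 <= B by apply: le_trans y_le; rewrite sumr_ge0.
have half_lead : `|y j| / 2 <= `|y j| - B * s.
  by have := ler_wpM2l B0 s_hi; lra.
rewrite /integrand_floor.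
have half_sigma0 : 0 <= sigma / 2 by rewrite divr_ge0 ?ltW.
have y_half0 : 0 <= `|y j| / 2 by rewrite divr_ge0.
apply: ler_pM; rewrite ?powR_ge0 ?exprn_ge0 ?mulr_ge0 ?exprn_ge0 //.
  by apply: ge0_ler_powR; rewrite ?nnegrE // subr_ge0.
rewrite -[gen_poly y s ^+ m]ger0_norm ?exprn_even_ge0 // normrX.
rewrite lerXn2r ?nnegrE ?mulr_ge0 ?exprn_ge0 //.
apply: le_trans lead_le; rewrite mulrC.
by apply: ler_pM; rewrite ?exprn_ge0 // lerXn2r ?nnegrE.
Qed.

Lemma hilbert_riemann_lower N (y : 'I_N -> R) (j : 'I_N) (B : R) (M L : nat) :
  (forall i : 'I_N, (i < j)%N -> y i = 0) -> \sum_(i < N) `|y i| <= B ->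
  (0 < M)%N -> (0 < L)%N -> B / M%:R <= `|y j| / 2 ->
  integrand_floor M%:R^-1 `|y j| j / (2 * M%:R) <= hilbert_riemann m a y (2 * M * L).
Proof.
move=> y_lt_j y_le M0 L0 B_M.
set K := (2 * M * L)%N; set c := integrand_floor _ _ _.
have Mp : 0 < M%:R :> R by rewrite ltr0n.
have Lp : 0 < L%:R :> R by rewrite ltr0n.
have KE : K%:R = 2 * M%:R * L%:R :> R by rewrite /K !natrM.
have Kp : 0 < K%:R :> R by rewrite KE !mulr_gt0.
pose T i := riemann_node R K i `^ (a - 1) * gen_poly y (riemann_node R K i) ^+ m.
have T_ge0 i : 0 <= T i by rewrite mulr_ge0 ?powR_ge0 ?exprn_even_ge0.
(* the nodes with index in [L, 2L) lie in [1 / (2M), 1 / M] *)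
have T_ge i : (L <= i < 2 * L)%N -> c <= T i.
  move=> /andP[Li i2L]; apply: (hilbert_integrand_lower y_lt_j y_le) => //.
  - by rewrite invr_gt0 Mp invf_le1 ?ler1n.
  have -> : M%:R^-1 / 2 = L%:R / K%:R :> R by rewrite KE; field; rewrite !gt_eqF.
  have -> : M%:R^-1 = (2 * L)%N%:R / K%:R :> R.
    by rewrite KE natrM; field; rewrite !gt_eqF.
  by rewrite !ler_pM2r ?invr_gt0 // !ler_nat (leqW Li).
have sum_ge : L%:R * c <= \sum_(i < K) T i.
  have L2L : (L <= 2 * L)%N by rewrite leq_pmull.
  have L2K : (2 * L <= K)%N by rewrite /K leq_mul2r leq_pmulr ?orbT.
  rewrite -(big_mkord xpredT T) (@big_cat_nat _ _ _ L 0 K) ?(leq_trans L2L L2K) //=.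
  rewrite (@big_cat_nat _ _ _ (2 * L) L K) //= addrCA -[X in X <= _]addr0.
  rewrite lerD ?addr_ge0 ?sumr_ge0 //.
  apply: le_trans (ler_sum_nat T_ge); rewrite sumr_const_nat.
  by rewrite mul2n -addnn addnK mulr_natl.
have -> : c / (2 * M%:R) = K%:R^-1 * (L%:R * c) by rewrite KE; field; rewrite !gt_eqF.
by apply: ler_wpM2l sum_ge; rewrite invr_ge0 ltW.
Qed.

Lemma gen_hilbert_form_lower (i0 : nat) (x0 B : R) : x0 != 0 -> 0 < B ->
  exists2 c : R, 0 < c & forall N (y : 'I_N -> R) (j : 'I_N),
    j = i0 :> nat -> y j = x0 -> (forall i : 'I_N, (i < j)%N -> y i = 0) ->
    \sum_(i < N) `|y i| <= B -> c <= gen_hilbert_form m a y.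
Proof.
move=> x0_neq0 B0; have x0p : 0 < `|x0| by rewrite normr_gt0.
pose M := (Num.Def.archi_bound (2 * B / `|x0|)).+1.
have Mp : 0 < M%:R :> R by rewrite ltr0n.
have B_M : B / M%:R <= `|x0| / 2.
  have : 2 * B / `|x0| < M%:R.
    apply: lt_le_trans (archi_boundP _) _; first by rewrite divr_ge0 ?mulr_ge0 // ltW.
    by rewrite ler_nat.
  rewrite ltr_pdivrMr // => lt_M; rewrite ler_pdivrMr //; nra.
exists (integrand_floor M%:R^-1 `|x0| i0 / (2 * M%:R)).
  by rewrite divr_gt0 ?integrand_floor_gt0 ?mulr_gt0 ?invr_gt0.
move=> N y j j_i0 yj_x0 y_lt_j y_le; subst i0 x0.
have Bm0 : 0 <= B ^+ m by rewrite exprn_ge0 ?(ltW B0).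
apply: (@ler_of_ler_add_divn _ _ _ (B ^+ m / (2 * M%:R))) => [|L L0].
  by rewrite divr_ge0 // mulr_ge0 // ltW.
have K0 : (0 < 2 * M * L)%N by rewrite !muln_gt0.
have G_ge := hilbert_riemann_lower y_lt_j y_le (isT : (0 < M)%N) L0 B_M.
have := hilbert_riemann_err m y a_ge1 K0.
rewrite distrC ler_norml => /andP[_ err_le].
have pow_le : (\sum_(i < N) `|y i|) ^+ m <= B ^+ m.
  by rewrite lerXn2r ?nnegrE ?sumr_ge0 ?(ltW B0).
have Kp : 0 < (2 * M * L)%:R :> R by rewrite ltr0n.
have -> : B ^+ m / (2 * M%:R) / L%:R = B ^+ m / (2 * M * L)%:R.
  by rewrite !natrM [in RHS]invfM mulrA.
have : (\sum_(i < N) `|y i|) ^+ m / (2 * M * L)%:R <= B ^+ m / (2 * M * L)%:R.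
  by rewrite ler_pM2r ?invr_gt0.
lra.
Qed.

End LowerBound.

Definition trunc (T : Type) (x : nat -> T) (N : nat) : 'I_N -> T := fun i => x i.
Arguments trunc {T} x N.

Section Truncations.
Variables (R : realType) (m : nat) (a : R) (x : nat -> R) (B : R).
Hypotheses (a_ge1 : 1 <= a) (sum_le : forall n, \sum_(i < n) `|x i| <= B).

Lemma gen_poly_trunc_norm_le N s : 0 <= s <= 1 -> `|gen_poly (trunc x N) s| <= B.
Proof. by move=> s01; apply: le_trans (sum_le N); apply: norm_sum_pow_le. Qed.

Lemma gen_poly_truncB N M s : (N <= M)%N -> 0 <= s <= 1 ->
  `|gen_poly (trunc x N) s - gen_poly (trunc x M) s| <= \sum_(N <= i < M) `|x i|.
Proof.
move=> NM s01; rewrite /gen_poly -!(big_mkord xpredT (fun i => x i * s ^+ i)).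
rewrite (@big_cat_nat _ _ _ N 0 M) //= opprD addrA subrr add0r normrN.
exact: norm_sum_pow_le.
Qed.

Lemma hilbert_riemann_truncB N M K : (N <= M)%N -> (0 < K)%N ->
  `|hilbert_riemann m a (trunc x N) K - hilbert_riemann m a (trunc x M) K|
    <= m%:R * B ^+ m.-1 * \sum_(N <= i < M) `|x i|.
Proof.
move=> NM K0; set C := m%:R * _ * _.
rewrite -mulrBr -sumrB normrM ger0_norm ?invr_ge0 ?ler0n // ler_pdivrMl ?ltr0n //.
rewrite -[K in X in _ <= X]card_ord mulr_natl -sumr_const.
apply: le_trans (ler_norm_sum _ _ _) _; apply: ler_sum => j _.
set s := riemann_node R K j.
have s0 : 0 < s := riemann_node_gt0 R j K0.
have s01 : 0 <= s <= 1 by rewrite ltW ?riemann_node_le1.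
rewrite -mulrBr normrM -[C]mul1r; apply: ler_pM => //.
  rewrite ger0_norm ?powR_ge0 // -[X in _ <= X](powRr0 s).
  by apply: ger_powR; rewrite ?s0 ?riemann_node_le1 // subr_ge0.
apply: le_trans (norm_exprB_le m (gen_poly_trunc_norm_le N s01)
  (gen_poly_trunc_norm_le M s01)) _.
have B0 : 0 <= B by apply: le_trans (sum_le 0); rewrite big_ord0.
by rewrite ler_wpM2l ?mulr_ge0 ?exprn_ge0 ?gen_poly_truncB.
Qed.

Lemma gen_hilbert_form_truncB N M : (N <= M)%N ->
  `|gen_hilbert_form m a (trunc x N) - gen_hilbert_form m a (trunc x M)|
    <= m%:R * B ^+ m.-1 * \sum_(N <= i < M) `|x i|.
Proof.
move=> NM; have B0 : 0 <= B by apply: le_trans (sum_le 0); rewrite big_ord0.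
apply: (@ler_of_ler_add_divn _ _ _ (2 * B ^+ m)) => [|K K0].
  by rewrite mulr_ge0 ?exprn_ge0.
have err n : `|gen_hilbert_form m a (trunc x n) - hilbert_riemann m a (trunc x n) K|
    <= B ^+ m / K%:R.
  apply: le_trans (hilbert_riemann_err _ _ a_ge1 K0) _.
  by rewrite ler_pM2r ?invr_gt0 ?ltr0n // lerXn2r ?nnegrE ?sumr_ge0.
have := hilbert_riemann_truncB NM K0; have := err N; have := err M.
set FN := gen_hilbert_form _ _ (trunc x N); set FM := gen_hilbert_form _ _ (trunc x M).
set GN := hilbert_riemann _ _ (trunc x N) K; set GM := hilbert_riemann _ _ (trunc x M) K.
have := ler_distD GN FN FM; have := ler_distD GM GN FM; rewrite (distrC GM FM).
have -> : 2 * B ^+ m / K%:R = B ^+ m / K%:R + B ^+ m / K%:R.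
  by rewrite -mulrA mulr2n mulrDl !mul1r.
lra.
Qed.

End Truncations.

Section InL1.
Variables (R : realType) (x : nat -> R).
Hypothesis x_l1 : in_l1 x.

Let S := [sequence \sum_(0 <= i < N) `|x i|]_N.

Lemma partial_sum_le_limn n : \sum_(0 <= i < n) `|x i| <= limn S.
Proof.
apply: (nondecreasing_cvgn_le _ x_l1) => p q pq.
by rewrite /S /= (@big_cat_nat _ _ _ p 0 q) //= lerDl sumr_ge0.
Qed.

Lemma in_l1_sum_le n : \sum_(i < n) `|x i| <= limn S.
Proof. by rewrite -(big_mkord xpredT (fun i => `|x i|)) partial_sum_le_limn. Qed.

Lemma in_l1_tail_lt e : 0 < e ->
  exists N0, forall n, (N0 <= n)%N -> \sum_(N0 <= i < n) `|x i| < e.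
Proof.
move=> e0; have [N0 _ S_near] := (cvgrPdist_lt _ _).1 x_l1 e e0.
exists N0 => n N0n; apply: le_lt_trans (S_near N0 (leqnn _)).
rewrite (le_trans _ (ler_norm _)) // lerBrDr addrC -(@big_cat_nat _ _ _ N0 0 n) //=.
exact: partial_sum_le_limn.
Qed.

Lemma gen_hilbert_form_trunc_cvg (m : nat) (a : R) : 1 <= a ->
  cvgn (fun N => gen_hilbert_form m a (trunc x N)).
Proof.
move=> a_ge1; set B := limn S.
have sum_le := in_l1_sum_le.
have B0 : 0 <= B by apply: le_trans (sum_le 0); rewrite big_ord0.
apply/cauchy_cvgP; apply: cauchy_exP => e e0.
set C := m%:R * B ^+ m.-1.
have C0 : 0 <= C by rewrite mulr_ge0 ?exprn_ge0.
have [N0 tail_lt] := in_l1_tail_lt (divr_gt0 e0 (ltr_wpDl C0 ltr01)).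
exists (gen_hilbert_form m a (trunc x N0)), N0 => // n /= N0n.
rewrite -ball_normE /ball_ /=.
apply: le_lt_trans (gen_hilbert_form_truncB m a_ge1 sum_le N0n) _.
have T0 : 0 <= \sum_(N0 <= i < n) `|x i| by rewrite sumr_ge0.
have := tail_lt n N0n; rewrite ltr_pdivlMr ?ltr_wpDl // -/C; nra.
Qed.

End InL1.

Local Open Scope classical_set_scope.

Theorem theorem3p1 (R : realType) (m : nat) (a : R) :
  (0 < m)%N -> ~~ odd m -> 1 <= a ->
  (forall x : nat -> R, in_l1 x -> (exists i, x i != 0) ->
     exists L : R,
       (gen_hilbert_form m a (fun i : 'I_N => x (nat_of_ord i))
          @[N --> \oo] --> L) /\ 0 < L)
  /\
  (forall (n : nat) (x : 'I_n -> R), (0 < n)%N -> (exists i, x i != 0) ->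
     0 < gen_hilbert_form m a x).
Proof.
move=> _ m_even a_ge1; split.
  move=> x x_l1 x_neq0; have [i0 xi0_neq0 i0_min] := ex_minnP x_neq0.
  have sum_le := in_l1_sum_le x_l1.
  have B0 : 0 < limn [sequence \sum_(0 <= i < N) `|x i|]_N.
    apply: lt_le_trans (sum_le i0.+1).
    by rewrite big_ord_recr /= ltr_wpDl ?sumr_ge0 // normr_gt0.
  have [c c0 c_le] := gen_hilbert_form_lower m_even a_ge1 i0 xi0_neq0 B0.
  have F_cvg := gen_hilbert_form_trunc_cvg (m := m) x_l1 a_ge1.
  exists (limn (fun N => gen_hilbert_form m a (trunc x N))); split => //.
  apply: lt_le_trans c0 (limr_ge F_cvg _).
  exists i0.+1 => // N /= i0N; apply: (c_le N (trunc x N) (Ordinal i0N)) => // i lt_i_i0.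
  by apply/eqP; apply: contraTT lt_i_i0 => /i0_min; rewrite -leqNgt.
move=> n x _ [i1 xi1_neq0].
case: (@arg_minnP _ i1 (fun i => x i != 0) val xi1_neq0) => j xj_neq0 j_min.
have B0 : 0 < \sum_(i < n) `|x i| + 1 by rewrite ltr_wpDl ?sumr_ge0.
have [c c0 c_le] := gen_hilbert_form_lower m_even a_ge1 j xj_neq0 B0.
apply: lt_le_trans c0 (c_le n x j erefl erefl _ _); last by rewrite lerDl.
by move=> i lt_i_j; apply/eqP; apply: contraTT lt_i_j => /j_min; rewrite -leqNgt.
Qed.
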